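(* Let $C\subset\mathbb{R}^2$ be the closed disk with center $(a,b)$ and radius $r>0$, and for $i\in\mathbb{N}$ let $C_i$ be the closed disk with center $(ia,ib)$ and radius $ir$. Let $\tau_2$ be the extremal ray of $L_{\mathbb{Q}_{\geq}}(C\cap\mathbb{R}^2_{\geq})$ of smaller slope, and suppose $C\cap\tau_2$ is a single point. For each $i$ with $C_i\cap C_{i+1}\neq\emptyset$, let $P_i$ be the point of $C_i\cap C_{i+1}$ closest to $\tau_2$. Then $\lim_{i\to\infty}\mathrm{d}(P_i,\tau_2)=0$.
   Context: $\mathbb{N}=\{0,1,2,\dots\}$. For $A\subseteq\mathbb{R}^2_{\geq}$, $L_{\mathbb{Q}_{\geq}}(A)=\{\sum_{i=1}^p q_ia_i\mid p\in\mathbb{N},\ q_i\in\mathbb{Q}_{\geq},\ a_i\in A\}$ and its extremal rays are its two boundary half-lines from the origin. $\mathrm{d}(P,\tau_2)$ is the Euclidean distance from the point $P$ to the line $\tau_2$. *)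

From Stdlib Require Import Reals Lra QArith List.
Open Scope R_scope.

Definition pt : Type := (R * R)%type.

Definition in_disk (c : pt) (rad : R) (p : pt) : Prop :=
  (fst p - fst c) ^ 2 + (snd p - snd c) ^ 2 <= rad ^ 2.

Definition quadrant (p : pt) : Prop := 0 <= fst p /\ 0 <= snd p.

Definition lin_comb (l : list (Q * pt)) : pt :=
  fold_right (fun qa acc =>
    (Q2R (fst qa) * fst (snd qa) + fst acc, Q2R (fst qa) * snd (snd qa) + snd acc))
    (0, 0) l.

Definition cone_Q (A : pt -> Prop) (p : pt) : Prop :=
  exists l : list (Q * pt),
    Forall (fun qa => (0 <= fst qa)%Q /\ A (snd qa)) l /\ p = lin_comb l.

Definition det (u p : pt) : R := fst u * snd p - snd u * fst p.

Definition ray (u : pt) (p : pt) : Prop :=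
  exists t, 0 <= t /\ p = (t * fst u, t * snd u).

(* {t u | t >= 0} is the boundary half-line of the planar cone K of smallest
   angle (= smaller slope): u is a nonzero point of the closure of K, and every
   point of K lies counterclockwise of (or on) the line through u. *)
Definition lower_extremal_ray (K : pt -> Prop) (u : pt) : Prop :=
  u <> (0, 0) /\
  (forall p, K p -> 0 <= det u p) /\
  (forall eps, 0 < eps -> exists p, K p /\
      (fst p - fst u) ^ 2 + (snd p - snd u) ^ 2 < eps ^ 2).

Definition dist_line (u P : pt) : R :=
  Rabs (det u P) / sqrt (fst u ^ 2 + snd u ^ 2).

Definition Ci (a b r : R) (i : nat) : pt -> Prop :=
  in_disk (INR i * a, INR i * b) (INR i * r).

(* If the ray touches C at the origin, every C_i contains the origin and
   d(P_i, tau_2) = 0.  Otherwise the ray is tangent to C at T = t u, so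
   v := c - T is orthogonal to T with |v| <= r.  The point
   q_x = (x + 1/2) T + lambda_x v,  lambda_x = |T|^2 / (4 x r^2),
   lies in every disk of center y c and radius y r for x <= y <= x + 1: its
   offset from y c is (x + 1/2 - y) T + (lambda_x - y) v, an orthogonal sum.
   As q_x - (x + 1/2) T is parallel to v, d(q_x, tau_2) <= lambda_x r = O(1/x),
   and the minimality of P_i does the rest. *)

From Stdlib Require Import Reals Lra Psatz.
Open Scope R_scope.

Lemma norm2_pos (u : pt) : u <> (0, 0) -> 0 < fst u ^ 2 + snd u ^ 2.
Proof.
  destruct u as [u1 u2]; cbn [fst snd]; intros Hu.
  destruct (Req_dec u1 0) as [->|Hu1]; [destruct (Req_dec u2 0) as [->|Hu2]|].
  - now contradiction Hu.
  - nra.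
  - nra.
Qed.

Lemma norm2_orth_comb (p1 p2 q1 q2 al be : R) :
  p1 * q1 + p2 * q2 = 0 ->
  (al * p1 + be * q1) ^ 2 + (al * p2 + be * q2) ^ 2
  = al ^ 2 * (p1 ^ 2 + p2 ^ 2) + be ^ 2 * (q1 ^ 2 + q2 ^ 2).
Proof.
  intros Horth.
  transitivity (al ^ 2 * (p1 ^ 2 + p2 ^ 2) + be ^ 2 * (q1 ^ 2 + q2 ^ 2)
                + 2 * al * be * (p1 * q1 + p2 * q2)); [ring|].
  rewrite Horth; ring.
Qed.

Lemma ray_scale_inj (u : pt) (s t : R) :
  u <> (0, 0) -> (s * fst u, s * snd u) = (t * fst u, t * snd u) -> s = t.
Proof.
  destruct u as [u1 u2]; cbn [fst snd]; intros Hu Heq.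
  injection Heq as E1 E2.
  destruct (Req_dec u1 0) as [->|Hu1].
  - assert (u2 <> 0) by (intros ->; contradiction Hu; reflexivity).
    apply (Rmult_eq_reg_r u2); lra.
  - apply (Rmult_eq_reg_r u1); lra.
Qed.

Lemma dist_line_nonneg (u p : pt) : u <> (0, 0) -> 0 <= dist_line u p.
Proof.
  intros Hu; unfold dist_line, Rdiv.
  apply Rmult_le_pos; [apply Rabs_pos|].
  apply Rlt_le, Rinv_0_lt_compat, sqrt_lt_R0, norm2_pos, Hu.
Qed.

Lemma dist_line_le (u p : pt) (rad : R) :
  u <> (0, 0) -> 0 <= rad -> fst p ^ 2 + snd p ^ 2 <= rad ^ 2 ->
  dist_line u p <= rad.
Proof.
  intros Hu Hrad Hp.
  pose proof (norm2_pos u Hu) as HN.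
  set (N := fst u ^ 2 + snd u ^ 2) in *.
  assert (Hs : 0 < sqrt N) by (apply sqrt_lt_R0; exact HN).
  assert (Hdet : det u p ^ 2 <= N * rad ^ 2).
  { transitivity (N * (fst p ^ 2 + snd p ^ 2)); [|apply Rmult_le_compat_l; lra].
    assert (Hlagrange : N * (fst p ^ 2 + snd p ^ 2) - det u p ^ 2
                        = (fst u * fst p + snd u * snd p) ^ 2) by (unfold det, N; ring).
    pose proof (pow2_ge_0 (fst u * fst p + snd u * snd p)); lra. }
  assert (Habs : Rabs (det u p) <= rad * sqrt N).
  { apply Rsqr_incr_0_var; [|apply Rmult_le_pos; lra].
    rewrite <- Rsqr_abs, Rsqr_mult, Rsqr_sqrt by lra.
    unfold Rsqr; lra. }
  unfold dist_line; fold N.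
  apply (Rmult_le_reg_r (sqrt N)); [exact Hs|].
  unfold Rdiv; rewrite Rmult_assoc, Rinv_l, Rmult_1_r by lra.
  exact Habs.
Qed.

Lemma dist_line_translate_ray (u1 u2 s lam v1 v2 : R) :
  dist_line (u1, u2) (s * u1 + lam * v1, s * u2 + lam * v2)
  = Rabs lam * dist_line (u1, u2) (v1, v2).
Proof.
  unfold dist_line, det; cbn [fst snd].
  replace (u1 * (s * u2 + lam * v2) - u2 * (s * u1 + lam * v1))
    with (lam * (u1 * v2 - u2 * v1)) by ring.
  rewrite Rabs_mult; unfold Rdiv; ring.
Qed.

(* If [D := u . (t u - c)] were nonzero, [t - eps D] would give a second point
   of the ray in the disk for small [eps > 0]. *)
Lemma ray_tangent (a b r u1 u2 t : R) :
  0 < t -> in_disk (a, b) r (t * u1, t * u2) ->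
  (forall s, 0 <= s -> in_disk (a, b) r (s * u1, s * u2) -> s = t) ->
  u1 * (t * u1 - a) + u2 * (t * u2 - b) = 0.
Proof.
  unfold in_disk; cbn [fst snd]; intros Ht Hin Huniq.
  set (D := u1 * (t * u1 - a) + u2 * (t * u2 - b)).
  set (N := u1 ^ 2 + u2 ^ 2).
  destruct (Req_dec D 0) as [|HD]; [assumption|exfalso].
  assert (HaD : 0 < Rabs D) by (apply Rabs_pos_lt; exact HD).
  assert (HN : 0 <= N) by (unfold N; nra).
  set (eps := t / (t * N + Rabs D)).
  assert (Heps : 0 < eps) by (apply Rdiv_lt_0_compat; nra).
  assert (Heps_def : eps * (t * N + Rabs D) = t) by (unfold eps; field; nra).
  assert (HepsD : eps * Rabs D <= t).
  { assert (0 <= eps * (t * N)) by (apply Rmult_le_pos; nra). nra. }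
  assert (HepsN : eps * N <= 1).
  { apply (Rmult_le_reg_l t); [exact Ht|].
    assert (0 <= eps * Rabs D) by (apply Rmult_le_pos; lra). nra. }
  assert (Hmove : ((t - eps * D) * u1 - a) ^ 2 + ((t - eps * D) * u2 - b) ^ 2
                  = (t * u1 - a) ^ 2 + (t * u2 - b) ^ 2 - eps * D ^ 2 * (2 - eps * N))
    by (unfold D, N; ring).
  assert (Hstay : t - eps * D = t).
  { apply Huniq.
    - pose proof (Rle_abs D). pose proof (Rle_abs (- D)). rewrite Rabs_Ropp in *. nra.
    - rewrite Hmove.
      assert (0 <= eps * D ^ 2 * (2 - eps * N))
        by (apply Rmult_le_pos; [apply Rmult_le_pos; [lra | apply pow2_ge_0] | lra]).
      lra. }
  assert (Hzero : eps * D = 0) by lra.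
  apply Rmult_integral in Hzero as [|]; lra.
Qed.

Section LensPoint.

Variables a b r u1 u2 t : R.
Hypothesis Hr : 0 < r.
Hypothesis Htangent : u1 * (t * u1 - a) + u2 * (t * u2 - b) = 0.
Hypothesis Htouch : in_disk (a, b) r (t * u1, t * u2).

Let T2 := t ^ 2 * (u1 ^ 2 + u2 ^ 2).

Definition lens_scale (x : R) : R := T2 / (4 * x * r ^ 2).

Definition lens_point (x : R) : pt :=
  ((x + / 2) * (t * u1) + lens_scale x * (a - t * u1),
   (x + / 2) * (t * u2) + lens_scale x * (b - t * u2)).

Lemma lens_scale_nonneg (x : R) : 0 < x -> 0 <= lens_scale x.
Proof.
  intros Hx; unfold lens_scale, T2.
  apply Rmult_le_pos; [apply Rmult_le_pos; [apply pow2_ge_0 | nra]|].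
  apply Rlt_le, Rinv_0_lt_compat, Rmult_lt_0_compat; [lra | apply pow_lt; lra].
Qed.

Lemma lens_point_in_disk (x y : R) :
  0 < x -> T2 <= 4 * x ^ 2 * r ^ 2 -> x <= y <= x + 1 ->
  in_disk (y * a, y * b) (y * r) (lens_point x).
Proof.
  intros Hx Hbig Hy.
  set (lam := lens_scale x).
  assert (Hlam_def : lam * (4 * x * r ^ 2) = T2)
    by (unfold lam, lens_scale; field; lra).
  assert (Hden : 0 < 4 * x * r ^ 2)
    by (apply Rmult_lt_0_compat; [lra | apply pow_lt; lra]).
  assert (HT2 : 0 <= T2)
    by (unfold T2; apply Rmult_le_pos; [apply pow2_ge_0 | nra]).
  assert (Hlam : 0 <= lam <= x).
  { split; [apply lens_scale_nonneg; exact Hx|].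
    apply (Rmult_le_reg_r (4 * x * r ^ 2)); nra. }
  unfold in_disk, lens_point; cbn [fst snd]; fold lam.
  replace ((x + / 2) * (t * u1) + lam * (a - t * u1) - y * a)
    with ((x + / 2 - y) * (t * u1) + (lam - y) * (a - t * u1)) by ring.
  replace ((x + / 2) * (t * u2) + lam * (b - t * u2) - y * b)
    with ((x + / 2 - y) * (t * u2) + (lam - y) * (b - t * u2)) by ring.
  rewrite norm2_orth_comb; cycle 1.
  { transitivity (- t * (u1 * (t * u1 - a) + u2 * (t * u2 - b))); [ring|].
    rewrite Htangent; ring. }
  replace ((t * u1) ^ 2 + (t * u2) ^ 2) with T2 by (unfold T2; ring).
  assert ((x + / 2 - y) ^ 2 * T2 <= / 4 * T2)
    by (apply Rmult_le_compat_r; [exact HT2 | nra]).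
  assert ((lam - y) ^ 2 * ((a - t * u1) ^ 2 + (b - t * u2) ^ 2) <= (lam - y) ^ 2 * r ^ 2).
  { apply Rmult_le_compat_l; [apply pow2_ge_0|].
    unfold in_disk in Htouch; cbn [fst snd] in Htouch; lra. }
  assert (0 <= lam * r ^ 2 * (2 * y - x - lam))
    by (apply Rmult_le_pos; [apply Rmult_le_pos; [lra | apply pow2_ge_0] | lra]).
  lra.
Qed.

Lemma dist_line_lens_point (x : R) :
  0 < x -> (u1, u2) <> (0, 0) ->
  dist_line (u1, u2) (lens_point x) <= T2 / (4 * x * r).
Proof.
  intros Hx Hu.
  replace (lens_point x)
    with ((x + / 2) * t * u1 + lens_scale x * (a - t * u1),
          (x + / 2) * t * u2 + lens_scale x * (b - t * u2))
    by (unfold lens_point; f_equal; ring).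
  rewrite dist_line_translate_ray, Rabs_pos_eq by (apply lens_scale_nonneg; exact Hx).
  replace (T2 / (4 * x * r)) with (lens_scale x * r)
    by (unfold lens_scale; field; lra).
  apply Rmult_le_compat_l; [apply lens_scale_nonneg; exact Hx|].
  apply dist_line_le; [exact Hu | lra|].
  unfold in_disk in Htouch; cbn [fst snd] in *; lra.
Qed.

End LensPoint.

Lemma Un_cv_0_of_le_div_INR (d : nat -> R) (K : R) (N0 : nat) :
  (forall i, 0 <= d i) -> (forall i, (N0 <= i)%nat -> d i <= K / INR i) ->
  Un_cv d 0.
Proof.
  intros Hpos Hle eps Heps.
  destruct (INR_unbounded (Rabs K / eps)) as [N1 HN1].
  exists (Nat.max N0 (S N1)); intros i Hi.
  assert (HiN1 : INR N1 + 1 <= INR i) by (rewrite <- S_INR; apply le_INR; lia).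
  assert (HK : 0 <= Rabs K / eps)
    by (apply Rmult_le_pos; [apply Rabs_pos | apply Rlt_le, Rinv_0_lt_compat, Heps]).
  assert (HKeps : eps * (Rabs K / eps) = Rabs K) by (field; lra).
  unfold R_dist; rewrite Rminus_0_r, Rabs_pos_eq by apply Hpos.
  apply Rle_lt_trans with (K / INR i); [apply Hle; lia|].
  apply (Rmult_lt_reg_r (INR i)); [lra|].
  unfold Rdiv; rewrite Rmult_assoc, Rinv_l, Rmult_1_r by lra.
  pose proof (Rle_abs K); nra.
Qed.

Lemma INR_eventually_large (c k : R) :
  0 < k -> exists N0, forall i, (N0 <= i)%nat -> 1 <= INR i /\ c <= k * INR i ^ 2.
Proof.
  intros Hk.
  destruct (INR_unbounded (1 + Rabs c / k)) as [N0 HN0].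
  exists N0; intros i Hi.
  assert (HN0i : INR N0 <= INR i) by (apply le_INR; exact Hi).
  assert (Hck : k * (Rabs c / k) = Rabs c) by (field; lra).
  assert (0 <= Rabs c / k)
    by (apply Rmult_le_pos; [apply Rabs_pos | apply Rlt_le, Rinv_0_lt_compat, Hk]).
  assert (Hx1 : 1 <= INR i) by lra.
  assert (k * (Rabs c / k) <= k * INR i) by (apply Rmult_le_compat_l; lra).
  assert (k * INR i <= k * INR i ^ 2) by (apply Rmult_le_compat_l; nra).
  pose proof (Rle_abs c).
  split; lra.
Qed.

Lemma origin_in_Ci (a b r : R) (i : nat) :
  in_disk (a, b) r (0, 0) -> Ci a b r i (0, 0).
Proof.
  unfold Ci, in_disk; cbn [fst snd]; intros H0.
  pose proof (pos_INR i).
  replace ((0 - INR i * a) ^ 2 + (0 - INR i * b) ^ 2)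
    with (INR i ^ 2 * ((0 - a) ^ 2 + (0 - b) ^ 2)) by ring.
  replace ((INR i * r) ^ 2) with (INR i ^ 2 * r ^ 2) by ring.
  apply Rmult_le_compat_l; [apply pow2_ge_0 | exact H0].
Qed.

Lemma Ci_inter_near_line (a b r : R) (u : pt) :
  0 < r -> u <> (0, 0) -> (exists! p, in_disk (a, b) r p /\ ray u p) ->
  exists K N0, forall i, (N0 <= i)%nat ->
    exists q, Ci a b r i q /\ Ci a b r (S i) q /\ dist_line u q <= K / INR i.
Proof.
  intros Hr Hu [p [[Hp [t [Ht0 ->]]] Huniq]].
  destruct u as [u1 u2]; cbn [fst snd] in *.
  destruct (Req_dec t 0) as [->|Ht].
  { exists 0, 0%nat; intros i _; exists (0, 0).
    rewrite !Rmult_0_l in Hp.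
    split; [|split]; try apply origin_in_Ci, Hp.
    unfold Rdiv; rewrite Rmult_0_l.
    apply dist_line_le; [exact Hu | lra | cbn; lra]. }
  assert (Hray_uniq : forall s, 0 <= s -> in_disk (a, b) r (s * u1, s * u2) -> s = t).
  { intros s Hs Hin.
    apply (ray_scale_inj (u1, u2)); [exact Hu|].
    symmetry; apply Huniq; split; [exact Hin | exists s; split; [exact Hs | reflexivity]]. }
  pose proof (ray_tangent a b r u1 u2 t ltac:(lra) Hp Hray_uniq) as Htangent.
  set (T2 := t ^ 2 * (u1 ^ 2 + u2 ^ 2)).
  assert (Hr2 : 0 < 4 * r ^ 2) by (apply Rmult_lt_0_compat; [lra | apply pow_lt, Hr]).
  destruct (INR_eventually_large T2 (4 * r ^ 2) Hr2) as [N0 HN0].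
  exists (T2 / (4 * r)), N0; intros i Hi.
  destruct (HN0 i Hi) as [Hi1 Hbig]; unfold T2 in Hbig.
  exists (lens_point a b r u1 u2 t (INR i)).
  split; [|split].
  - apply lens_point_in_disk; [exact Hr | exact Htangent | exact Hp | lra | lra | lra].
  - unfold Ci; rewrite S_INR.
    apply lens_point_in_disk; [exact Hr | exact Htangent | exact Hp | lra | lra | lra].
  - replace (T2 / (4 * r) / INR i) with (T2 / (4 * INR i * r)) by (field; lra).
    apply dist_line_lens_point; [exact Hr | exact Hp | lra | exact Hu].
Qed.

Theorem lemma4p1 (a b r : R) (u : pt) (P : nat -> pt) :
  0 < r ->
  lower_extremal_ray (cone_Q (fun p => in_disk (a, b) r p /\ quadrant p)) u ->
  (exists! p, in_disk (a, b) r p /\ ray u p) ->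
  (forall i : nat, (exists q, Ci a b r i q /\ Ci a b r (S i) q) ->
     Ci a b r i (P i) /\ Ci a b r (S i) (P i) /\
     (forall q, Ci a b r i q -> Ci a b r (S i) q -> dist_line u (P i) <= dist_line u q)) ->
  Un_cv (fun i => dist_line u (P i)) 0.
Proof.
  (* Extremality is only used through [u <> 0]: any ray touching C at a single
     point will do. *)
  intros Hr [Hu _] Hunique HP.
  destruct (Ci_inter_near_line a b r u Hr Hu Hunique) as (K & N0 & Hwitness).
  apply (Un_cv_0_of_le_div_INR _ K N0).
  - intros i; apply dist_line_nonneg, Hu.
  - intros i Hi.
    destruct (Hwitness i Hi) as (q & Hq & HSq & Hdq).
    destruct (HP i (ex_intro _ q (conj Hq HSq))) as (_ & _ & Hmin).
    exact (Rle_trans _ _ _ (Hmin q Hq HSq) Hdq).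
Qed.
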